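(* Let $\Theta$ be a variety of algebras and $H\in\Theta$. If $H$ is logically noetherian, then $H$ is LG-saturated.
   Context: Fix a variety $\Theta$ of algebras (its signature may contain constants); all algebras considered lie in $\Theta$. Let $X^0$ be an infinite set of variables and $\Gamma^0$ the set of finite subsets of $X^0$. For $X\in\Gamma^0$, $W(X)$ is the free algebra of $\Theta$ on $X$. For $H\in\Theta$, a point is a homomorphism $\mu:W(X)\to H$, and $\mathrm{Hom}(W(X),H)$ is the affine space of points. $Hal^X_\Theta(H)$ is the Boolean algebra of all subsets of $\mathrm{Hom}(W(X),H)$ with existential quantifiers $\exists x$ ($x\in X$), where $\mu\in\exists x A$ iff some $\nu\in A$ agrees with $\mu$ on $X\setminus\{x\}$, and with equalities $[w\equiv w']_H=\{\mu:\mu(w)=\mu(w')\}$ for $w,w'\in W(X)$; for a homomorphism $s:W(X)\to W(Y)$ one has $s_*:Hal^X_\Theta(H)\to Hal^Y_\Theta(H)$, $s_*A=\{\nu:W(Y)\to H\mid \nu s\in A\}$. The multi-sorted algebra of formulas $\tilde\Phi=(\Phi(X),X\in\Gamma^0)$ is the free algebra, over the sets of equalities $w\equiv w'$ ($w,w'\in W(X)$), in the variety of multi-sorted Halmos algebras over $\Theta$; each $\Phi(X)$ is a Boolean algebra with quantifiers $\exists x$, $x\in X$, and equality constants, and each homomorphism $s:W(X)\to W(Y)$ gives an operation $s_*:\Phi(X)\to\Phi(Y)$. $Val_H=(Val^X_H)$ is the unique homomorphism $\tilde\Phi\to(Hal^X_\Theta(H))_X$ sending $w\equiv w'$ to $[w\equiv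 w']_H$. A point $\mu$ satisfies $u\in\Phi(X)$ iff $\mu\in Val^X_H(u)$; $LKer(\mu)=\{u\in\Phi(X):\mu\in Val^X_H(u)\}$, and $Th^X(H)=\{u\in\Phi(X): Val^X_H(u)=\mathrm{Hom}(W(X),H)\}$. For $T\subset\Phi(X)$, $T^L_H=\{\mu:W(X)\to H\mid T\subset LKer(\mu)\}$. $H$ is logically noetherian if for every $X\in\Gamma^0$ and every $T\subset\Phi(X)$ there is a finite $T_0\subset T$ with $(T_0)^L_H=T^L_H$. $H$ is LG-saturated if for every $X\in\Gamma^0$ and every Boolean ultrafilter $T$ of $\Phi(X)$ containing $Th^X(H)$ there is a point $\mu:W(X)\to H$ with $T=LKer(\mu)$. *)

From mathcomp Require Import all_boot finmap.
From Stdlib Require Import ClassicalEpsilon List.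

Set Implicit Arguments.
Unset Strict Implicit.
Unset Printing Implicit Defensive.

Local Open Scope fset_scope.

Section Universal.
Variables (O : Type) (ar : O -> nat).

Inductive term (V : Type) : Type :=
| Var : V -> term V
| Op : forall o : O, ('I_(ar o) -> term V) -> term V.

Record algebra := Algebra {
  carrier :> Type;
  interp : forall o : O, ('I_(ar o) -> carrier) -> carrier }.

Fixpoint eval (A : algebra) (V : Type) (e : V -> A) (t : term V) : A :=
  match t with
  | Var x => e x
  | Op o args => @interp A o (fun i => eval e (args i))
  end.

(* The variety Theta is given by a set [Ids] of identities over the
   variables nat; an algebra lies in Theta iff it satisfies them all. *)
Definition in_variety (Ids : term nat -> term nat -> Prop) (A : algebra) :=
  forall p q, Ids p q -> forall e : nat -> A, eval e p = eval e q.

(* X^0 = nat (infinite); Gamma^0 = finite subsets {fset nat}.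
   A point mu : W(X) -> H is determined by (and identified with) its values
   on the free generators X, i.e. a map X -> H. An element of W(X) is
   represented by a term over X; a homomorphism s : W(X) -> W(Y) by the
   images s x (terms over Y) of the generators. *)
Definition point (X : {fset nat}) (A : algebra) := X -> A.

Inductive form : {fset nat} -> Type :=
| Feq (X : {fset nat}) : term X -> term X -> form X
| Ftop (X : {fset nat}) : form X
| Fbot (X : {fset nat}) : form X
| Fneg (X : {fset nat}) : form X -> form X
| Fand (X : {fset nat}) : form X -> form X -> form X
| For (X : {fset nat}) : form X -> form X -> form X
| Fex (X : {fset nat}) : X -> form X -> form X
| Fsub (X Y : {fset nat}) : (X -> term Y) -> form X -> form Y.

Fixpoint val (A : algebra) (X : {fset nat}) (u : form X) : point X A -> Prop :=
  match u in form X return point X A -> Prop with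
  | Feq _ w w' => fun mu => eval mu w = eval mu w'
  | Ftop _ => fun _ => True
  | Fbot _ => fun _ => False
  | Fneg _ u => fun mu => ~ val u mu
  | Fand _ u v => fun mu => val u mu /\ val v mu
  | For _ u v => fun mu => val u mu \/ val v mu
  | Fex _ x u => fun mu =>
      exists nu : point _ A, val u nu /\ (forall y, y <> x -> nu y = mu y)
  | Fsub _ _ s u => fun nu => val u (fun x => eval nu (s x))
  end.

Variable Ids : term nat -> term nat -> Prop.

(* Two formulas are identified in the free Halmos algebra Phi iff they have
   the same value in every Hal_Theta(G), G in Theta (the variety of Halmos
   algebras over Theta is generated by the algebras Hal_Theta(G)). *)
Definition fequiv (X : {fset nat}) (u v : form X) : Prop :=
  forall G : algebra, in_variety Ids G ->
    forall mu : point X G, val u mu <-> val v mu.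

Definition Phi (X : {fset nat}) : Type :=
  { P : form X -> Prop | exists u, forall v, P v <-> fequiv u v }.

Definition cls (X : {fset nat}) (u : form X) : Phi X :=
  exist _ (fequiv u) (ex_intro _ u (fun v => iff_refl _)).

Definition rep (X : {fset nat}) (c : Phi X) : form X :=
  proj1_sig (constructive_indefinite_description _ (proj2_sig c)).

Definition Phi_top X : Phi X := cls (Ftop X).
Definition Phi_bot X : Phi X := cls (Fbot X).
Definition Phi_neg X (a : Phi X) : Phi X := cls (Fneg (rep a)).
Definition Phi_and X (a b : Phi X) : Phi X := cls (Fand (rep a) (rep b)).
Definition Phi_or X (a b : Phi X) : Phi X := cls (For (rep a) (rep b)).
Definition Phi_le X (a b : Phi X) : Prop := Phi_and a b = a.

Definition ultrafilter X (T : Phi X -> Prop) : Prop :=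
  [/\ T (Phi_top X),
      ~ T (Phi_bot X),
      (forall a b, T a -> T b -> T (Phi_and a b)),
      (forall a b, T a -> Phi_le a b -> T b) &
      (forall a, T a \/ T (Phi_neg a))].

(* Val^X_H on Phi(X) (well defined for H in Theta). *)
Definition Val (H : algebra) X (c : Phi X) : point X H -> Prop := @val H X (rep c).

Definition LKer (H : algebra) X (mu : point X H) : Phi X -> Prop :=
  fun c => @Val H X c mu.

Definition Th (H : algebra) X : Phi X -> Prop :=
  fun c => forall mu : point X H, @Val H X c mu.

Definition LClosure (H : algebra) X (T : Phi X -> Prop) : point X H -> Prop :=
  fun mu => forall c, T c -> @LKer H X mu c.

Definition logically_noetherian (H : algebra) : Prop :=
  forall (X : {fset nat}) (T : Phi X -> Prop),
    exists T0 : list (Phi X),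
      (forall c, In c T0 -> T c) /\
      (forall mu : point X H,
         @LClosure H X (fun c => In c T0) mu <-> @LClosure H X T mu).

Definition LG_saturated (H : algebra) : Prop :=
  forall (X : {fset nat}) (T : Phi X -> Prop),
    ultrafilter T -> (forall c, @Th H X c -> T c) ->
    exists mu : point X H, forall c, T c <-> @LKer H X mu c.

End Universal.

From Pilot Require Import Defs.
From mathcomp Require Import all_boot finmap.
From Stdlib Require Import ClassicalEpsilon List Classical FunctionalExtensionality PropExtensionality ProofIrrelevance.

Set Implicit Arguments.
Unset Strict Implicit.

(* Let T be an ultrafilter of Phi(X) containing Th^X(H). Noetherianity gives a
   finite T0 in T with the same solution set T^L_H; the conjunction u of T0 lies
   in T. If T^L_H were empty, no point would satisfy u, so its negation would
   be in Th^X(H), hence in T together with u: impossible. So some mu satisfies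
   all of T, i.e. T is contained in the ultrafilter LKer(mu), and maximality
   of ultrafilters forces T = LKer(mu). *)

Section FormulaClasses.
Variables (O : Type) (ar : O -> nat) (Ids : term ar nat -> term ar nat -> Prop).

Lemma fequiv_refl X (u : form ar X) : fequiv Ids u u.
Proof. by []. Qed.

Lemma cls_eq X (u v : form ar X) : fequiv Ids u v -> cls Ids u = cls Ids v.
Proof.
move=> uv; apply: subset_eq_compat.
apply: functional_extensionality => w; apply: propositional_extensionality.
by split=> hw G HG mu; rewrite -(hw G HG mu) (uv G HG mu).
Qed.

Lemma val_rep_cls X (u : form ar X) {G : algebra ar} : in_variety Ids G ->
  forall mu : point X G, Defs.val (rep (cls Ids u)) mu <-> Defs.val u mu.
Proof.
move=> HG mu; rewrite /rep.
case: constructive_indefinite_description => r /= Hr.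
have ur : fequiv Ids u r by apply/Hr; exact: fequiv_refl.
by split; move/(ur G HG mu).
Qed.

Lemma Phi_and_neg X (c : Phi Ids X) : Phi_and c (Phi_neg c) = Phi_bot Ids X.
Proof.
apply: cls_eq => G HG mu /=; rewrite /Phi_neg (val_rep_cls _ HG) /=; tauto.
Qed.

Definition Phi_bigand X (l : list (Phi Ids X)) : Phi Ids X :=
  fold_right (@Phi_and _ _ _ X) (Phi_top Ids X) l.

Lemma ultrafilter_neg X (T : Phi Ids X -> Prop) c :
  ultrafilter T -> T c -> T (Phi_neg c) -> False.
Proof.
case=> _ Tbot Tand _ _ Tc Tnc; apply: Tbot.
by rewrite -(Phi_and_neg c); apply: Tand.
Qed.

Lemma ultrafilter_bigand X (T : Phi Ids X -> Prop) (l : list (Phi Ids X)) :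
  ultrafilter T -> (forall c, In c l -> T c) -> T (Phi_bigand l).
Proof.
case=> Ttop _ Tand _ _; elim: l => [|a l IH] Tl //=.
by apply: Tand; [apply: Tl; left | apply: IH => c lc; apply: Tl; right].
Qed.

Variable H : algebra ar.
Hypothesis HH : in_variety Ids H.

Lemma Val_and X (a b : Phi Ids X) (mu : point X H) :
  Val (Phi_and a b) mu <-> Val a mu /\ Val b mu.
Proof. by rewrite /Val /Phi_and (val_rep_cls _ HH). Qed.

Lemma Val_neg X (a : Phi Ids X) (mu : point X H) :
  Val (Phi_neg a) mu <-> ~ Val a mu.
Proof. by rewrite /Val /Phi_neg (val_rep_cls _ HH). Qed.

Lemma Val_top X (mu : point X H) : Val (Phi_top Ids X) mu.
Proof. by apply/(val_rep_cls _ HH). Qed.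

Lemma Val_bigand X (l : list (Phi Ids X)) (mu : point X H) :
  Val (Phi_bigand l) mu <-> LClosure (fun c => In c l) mu.
Proof.
elim: l => [|a l IH] /=; first by split=> [_ c []|_]; exact: Val_top.
rewrite Val_and IH; split=> [[Va Vl] c [<-|lc] //|Vl]; first exact: Vl.
by split=> [|c lc]; apply: Vl; [left | right].
Qed.

Lemma ultrafilter_LClosure_LKer X (T : Phi Ids X -> Prop) (mu : point X H) :
  ultrafilter T -> LClosure T mu -> forall c, T c <-> LKer mu c.
Proof.
move=> UT Tmu c; split=> [|Vc]; first exact: Tmu.
case: UT => _ _ _ _ /(_ c) [] // Tnc.
by move: (Tmu _ Tnc); rewrite /LKer Val_neg.
Qed.

Lemma noetherian_ultrafilter_LClosure X (T : Phi Ids X -> Prop) :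
  logically_noetherian Ids H -> ultrafilter T -> (forall c, Th H c -> T c) ->
  exists mu : point X H, LClosure T mu.
Proof.
move=> HN UT ThT; have [T0 [T0T T0L]] := HN X T.
apply: NNPP => noLT; apply: (ultrafilter_neg UT (ultrafilter_bigand UT T0T)).
apply: ThT => mu; rewrite Val_neg Val_bigand T0L => LTmu.
by apply: noLT; exists mu.
Qed.

End FormulaClasses.

Theorem theorem2p15 (O : Type) (ar : O -> nat)
  (Ids : term ar nat -> term ar nat -> Prop) (H : algebra ar) :
  in_variety Ids H ->
  logically_noetherian Ids H -> LG_saturated Ids H.
Proof.
move=> HH HN X T UT ThT.
have [mu LTmu] := noetherian_ultrafilter_LClosure HH HN UT ThT.
by exists mu; apply: ultrafilter_LClosure_LKer.
Qed.
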